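(* Let $0<q<1$, $s\ge1$, $\alpha\in\mathbb{R}\setminus\mathbb{Z}_-$. For $j=1,\dots,s-1$ let $a_j>0$, $c_j>0$ be real and $b_j,d_j\in\mathbb{C}$ with $a_jn+\mathrm{Re}(b_j)\notin\mathbb{Z}_-$ and $c_jn+\mathrm{Re}(d_j)\notin\mathbb{Z}_-$ for all positive integers $n$ (for $s=1$ there are no such parameters). Then, uniformly on compact subsets of $\mathbb{C}$, $$\lim_{n\to+\infty}{}_s\phi_s\!\left(\begin{array}{c}q^{-n},q^{a_1n+b_1},\dots,q^{a_{s-1}n+b_{s-1}}\\ q^{\alpha},q^{c_1n+d_1},\dots,q^{c_{s-1}n+d_{s-1}}\end{array};q,q^nz\right)={}_0\phi_1\!\left(\begin{array}{c}-\\ q^{\alpha}\end{array};q,z\right)=\left(\frac{-z}{(q-1)^2q^{\alpha}}\right)^{\frac{1-\alpha}{2}}\Gamma_q(\alpha)\,J^{(2)}_{\alpha-1}\!\left(2\sqrt{\frac{-z}{q^{\alpha}}};q\right),$$ where in the last expression powers and square roots are taken with principal branches and the expression is understood as the entire function given by the ${}_0\phi_1$.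
   Context: $\mathbb{Z}_-=\{0,-1,-2,\dots\}$. For $w\in\mathbb{C}$, $q^{w}:=e^{w\ln q}$. For $a\in\mathbb{C}$: $(a;q)_0=1$, $(a;q)_k=\prod_{j=0}^{k-1}(1-aq^{j})$, $(a;q)_\infty=\prod_{j\ge0}(1-aq^{j})$, and $(a_1,\dots,a_r;q)_k=\prod_{i=1}^r(a_i;q)_k$. The basic hypergeometric series is $${}_r\phi_s\!\left(\begin{array}{c}a_1,\dots,a_r\\ b_1,\dots,b_s\end{array};q,z\right)=\sum_{k=0}^{\infty}\frac{(a_1,\dots,a_r;q)_k}{(b_1,\dots,b_s;q)_k}(-1)^{(1+s-r)k}q^{(1+s-r)\binom{k}{2}}\frac{z^k}{(q;q)_k};$$ ''$-$'' denotes an empty parameter list. The $q$-Gamma function is $\Gamma_q(z)=\dfrac{(q;q)_\infty}{(q^{z};q)_\infty}(1-q)^{1-z}$. The $q$-Bessel function is $J^{(2)}_{\nu}(x;q)=\dfrac{(q^{\nu+1};q)_\infty}{(q;q)_\infty}\left(\dfrac{x}{2}\right)^{\nu}{}_0\phi_1\!\left(\begin{array}{c}-\\ q^{\nu+1}\end{array};q,-\dfrac{q^{\nu+1}x^2}{4}\right)$. *)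

From Stdlib Require Import Reals List.
From Coquelicot Require Import Coquelicot.
Open Scope R_scope.

Definition Cexp (w : C) : C := (exp (fst w) * cos (snd w), exp (fst w) * sin (snd w)).

Definition qpow (q : R) (w : C) : C := Cexp (Cmult (RtoC (ln q)) w).

(** Principal argument in (-pi, pi]. *)
Definition Carg (w : C) : R :=
  let x := fst w in let y := snd w in
  if Rlt_dec 0 x then atan (y / x)
  else if Rlt_dec x 0 then
    (if Rle_dec 0 y then atan (y / x) + PI else atan (y / x) - PI)
  else (if Rlt_dec 0 y then PI / 2 else if Rlt_dec y 0 then - (PI / 2) else 0).

Definition Clog (w : C) : C := (ln (Cmod w), Carg w).
Definition cpow (w c : C) : C := Cexp (Cmult c (Clog w)).
Definition csqrt (w : C) : C := cpow w (RtoC (1 / 2)).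

Fixpoint qpoch (a : C) (q : R) (k : nat) : C :=
  match k with
  | O => RtoC 1
  | S k' => Cmult (qpoch a q k') (Cminus (RtoC 1) (Cmult a (RtoC (q ^ k'))))
  end.

Definition qpoch_list (l : list C) (q : R) (k : nat) : C :=
  fold_right (fun a acc => Cmult (qpoch a q k) acc) (RtoC 1) l.

Definition Clim (u : nat -> C) : C := @lim C_CompleteNormedModule (filtermap u eventually).

Definition qpoch_inf (a : C) (q : R) : C := Clim (qpoch a q).

Fixpoint Cpsum (u : nat -> C) (N : nat) : C :=
  match N with
  | O => u O
  | S N' => Cplus (Cpsum u N') (u N)
  end.
Definition Cseries (u : nat -> C) : C := Clim (Cpsum u).

Definition phi_term (al bl : list C) (q : R) (z : C) (k : nat) : C :=
  let r := length al in let s := length bl in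
  Cmult (Cdiv (qpoch_list al q k) (qpoch_list bl q k))
    (Cmult (RtoC (powerRZ ((-1) ^ k * q ^ (Nat.div (k * (k - 1)) 2))
                         (1 + Z.of_nat s - Z.of_nat r)%Z))
       (Cdiv (Cpow z k) (qpoch (RtoC q) q k))).

Definition phi (al bl : list C) (q : R) (z : C) : C :=
  Cseries (phi_term al bl q z).

Definition qGamma (q : R) (w : C) : C :=
  Cmult (Cdiv (qpoch_inf (RtoC q) q) (qpoch_inf (qpow q w) q))
        (qpow (1 - q) (Cminus (RtoC 1) w)).

Definition J2 (nu x : C) (q : R) : C :=
  let qn1 := qpow q (Cplus nu (RtoC 1)) in
  Cmult (Cdiv (qpoch_inf qn1 q) (qpoch_inf (RtoC q) q))
   (Cmult (cpow (Cdiv x (RtoC 2)) nu)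
     (phi nil (qn1 :: nil) q
        (Cdiv (Copp (Cmult qn1 (Cmult x x))) (RtoC 4)))).

Definition compactC (K : C -> Prop) : Prop :=
  forall (I : Type) (U : I -> C -> Prop),
    (forall i, @open C_UniformSpace (U i)) ->
    (forall z, K z -> exists i, U i z) ->
    exists l : list I, forall z, K z -> exists i, In i l /\ U i z.

Definition cvg_unif_compact (f : nat -> C -> C) (g : C -> C) : Prop :=
  forall K, compactC K ->
    forall eps : R, 0 < eps ->
      exists N : nat, forall n : nat, (N <= n)%nat ->
        forall z, K z -> Cmod (Cminus (f n z) (g z)) < eps.

From Stdlib Require Import Reals List Lra Lia ZArith.
From Coquelicot Require Import Coquelicot.
Open Scope R_scope.

(* After the substitution [z := q^n z], the k-th term of the s_phi_s series is [z^k] times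
   a coefficient in which [(q^-n; q)_k q^(nk) = prod_(j<k) (q^n - q^j)] tends to
   [(-1)^k q^(k(k-1)/2)] and the q-Pochhammer symbols with parameters [q^(a_j n + b_j)],
   [q^(c_j n + d_j)] tend to 1, as these parameters tend to 0; so each coefficient tends to
   the corresponding coefficient of [0_phi_1(-; q^alpha; q, z)].  For [n] large and [|z| <= R]
   all terms, and those of the limit series, are bounded by [q^(k(k-1)/2) G^k], a summable
   majorant, and Tannery's theorem gives uniform convergence on discs, hence on compact sets.
   The closed form is an identity of series: the infinite products in [Gamma_q] and
   [J^(2)_(alpha-1)] cancel, the argument of the [0_phi_1] inside [J^(2)] is again [z], and the
   principal powers cancel because [Log (sqrt w) = Log w / 2]. *)

Lemma Cexp_RtoC r : Cexp (RtoC r) = RtoC (exp r).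
Proof. unfold Cexp, RtoC; simpl. rewrite cos_0, sin_0. f_equal; ring. Qed.

Lemma Cmod_Cexp w : Cmod (Cexp w) = exp (fst w).
Proof.
  unfold Cmod, Cexp; cbn [fst snd].
  pose proof (sin2_cos2 (snd w)) as H. unfold Rsqr in H.
  replace ((exp (fst w) * cos (snd w)) ^ 2 + (exp (fst w) * sin (snd w)) ^ 2)
    with (exp (fst w) ^ 2) by (rewrite <- Rmult_1_r at 1; rewrite <- H; ring).
  apply sqrt_pow2. left; apply exp_pos.
Qed.

Lemma Cexp_plus u v : Cexp (u + v)%C = (Cexp u * Cexp v)%C.
Proof.
  destruct u as [a b], v as [c d]; unfold Cexp, Cmult, Cplus; simpl.
  rewrite exp_plus, cos_plus, sin_plus. f_equal; ring.
Qed.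

Lemma qpow_RtoC q r : qpow q (RtoC r) = RtoC (exp (ln q * r)).
Proof.
  unfold qpow. rewrite <- Cexp_RtoC. f_equal. unfold RtoC, Cmult; simpl; f_equal; ring.
Qed.

Lemma Cmod_qpow q w : Cmod (qpow q w) = exp (ln q * fst w).
Proof. unfold qpow. rewrite Cmod_Cexp. simpl. f_equal. ring. Qed.

Lemma pow_exp_ln q n : 0 < q -> q ^ n = exp (ln q * INR n).
Proof.
  intros Hq. induction n as [|n IH]; simpl; [rewrite Rmult_0_r, exp_0; reflexivity|].
  rewrite IH, <- (exp_ln q) at 1 by exact Hq. rewrite <- exp_plus. f_equal.
  destruct n; simpl; ring.
Qed.

Lemma exp_ln_lt_1 q x : 0 < q < 1 -> 0 < x -> 0 < exp (ln q * x) < 1.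
Proof.
  intros Hq Hx. split; [apply exp_pos|]. rewrite <- exp_0. apply exp_increasing.
  assert (ln q < 0) by (rewrite <- ln_1; apply ln_increasing; lra). nra.
Qed.

Lemma exp_ln_mul_pow_neq_1 q alpha j : 0 < q < 1 -> (forall m : nat, alpha <> - INR m) ->
  exp (ln q * alpha) * q ^ j <> 1.
Proof.
  intros Hq Hal Hj. rewrite pow_exp_ln, <- exp_plus, <- exp_0 in Hj by lra.
  apply exp_inv in Hj.
  assert (ln q < 0) by (rewrite <- ln_1; apply ln_increasing; lra).
  apply (Hal j). nra.
Qed.

Definition Ccvg (u : nat -> C) (L : C) : Prop :=
  forall eps, 0 < eps -> exists N, forall n, (N <= n)%nat -> Cmod (u n - L)%C < eps.

Lemma Ccvg_filterlim u L : Ccvg u L <-> filterlim u eventually (@locally C_NormedModule L).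
Proof.
  rewrite filterlim_locally_ball_norm. split.
  - intros H eps. apply (H eps (cond_pos eps)).
  - intros H eps He. apply (H (mkposreal eps He)).
Qed.

Lemma Ccvg_ext u v L : (forall n, u n = v n) -> Ccvg u L -> Ccvg v L.
Proof.
  intros E H eps He. destruct (H eps He) as [N HN]. exists N. intros n Hn. rewrite <- E. auto.
Qed.

Lemma Ccvg_const c : Ccvg (fun _ => c) c.
Proof.
  intros eps He. exists O. intros n _. replace (c - c)%C with (RtoC 0) by ring.
  rewrite Cmod_0. exact He.
Qed.

(* [C_NormedModule] carries the product uniformity, while [filterlim_mult] and [filterlim_plus]
   are stated for the absolute-value uniformity of [C_AbsRing]. *)
Lemma Ccvg_filterlim_abs u L :
  Ccvg u L <-> filterlim u eventually (@locally (AbsRing_NormedModule C_AbsRing) L).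
Proof.
  rewrite (@filterlim_locally_ball_norm C_AbsRing nat (AbsRing_NormedModule C_AbsRing))
    by apply eventually_filter.
  split; intros H.
  - intros eps. exact (H eps (cond_pos eps)).
  - intros eps He. exact (H (mkposreal eps He)).
Qed.

Lemma Ccvg_mult u v a b : Ccvg u a -> Ccvg v b -> Ccvg (fun n => u n * v n)%C (a * b)%C.
Proof.
  rewrite !Ccvg_filterlim_abs. intros Hu Hv.
  exact (filterlim_comp_2 u v (@mult C_AbsRing) Hu Hv (filterlim_mult a b)).
Qed.

Lemma Ccvg_plus u v a b : Ccvg u a -> Ccvg v b -> Ccvg (fun n => u n + v n)%C (a + b)%C.
Proof.
  rewrite !Ccvg_filterlim_abs. intros Hu Hv.
  exact (filterlim_comp_2 u v _ Hu Hv
           (@filterlim_plus C_AbsRing (AbsRing_NormedModule C_AbsRing) a b)).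
Qed.

Lemma Ccvg_inv u a : a <> RtoC 0 -> Ccvg u a -> Ccvg (fun n => / u n)%C (/ a)%C.
Proof.
  intros Ha Hu eps He.
  assert (Hma : 0 < Cmod a) by (apply Cmod_gt_0; auto).
  set (d := Rmin (Cmod a / 2) (eps * Cmod a * Cmod a / 2)).
  assert (Hd : 0 < d) by (apply Rmin_pos; [lra|]; apply Rdiv_lt_0_compat; [|lra];
    repeat apply Rmult_lt_0_compat; lra).
  destruct (Hu d Hd) as [N HN]. exists N. intros n Hn. specialize (HN n Hn).
  assert (Hd1 : d <= Cmod a / 2) by apply Rmin_l.
  assert (Hd2 : d <= eps * Cmod a * Cmod a / 2) by apply Rmin_r.
  assert (Hun : Cmod a / 2 <= Cmod (u n)).
  { pose proof (Cmod_triangle (a - u n)%C (u n)) as Htri.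
    replace (a - u n + u n)%C with a in Htri by ring.
    replace (a - u n)%C with (- (u n - a))%C in Htri by ring. rewrite Cmod_opp in Htri. lra. }
  assert (Hu0 : u n <> RtoC 0) by (apply Cmod_gt_0; lra).
  replace (/ u n - / a)%C with (- (u n - a) * / (u n * a))%C by (field; auto).
  rewrite Cmod_mult, Cmod_opp, Cmod_inv, Cmod_mult by (apply Cmult_neq_0; auto).
  apply Rmult_lt_reg_r with (Cmod (u n) * Cmod a); [nra|].
  rewrite Rmult_assoc, Rinv_l by nra. nra.
Qed.

Lemma Ccvg_RtoC (u : nat -> R) (l : R) : is_lim_seq u l -> Ccvg (fun n => RtoC (u n)) (RtoC l).
Proof.
  intros H eps He. apply is_lim_seq_spec in H. destruct (H (mkposreal eps He)) as [N HN].
  exists N. intros n Hn. replace (RtoC (u n) - RtoC l)%C with (RtoC (u n - l))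
    by (unfold Cminus, Cplus, Copp, RtoC; simpl; f_equal; ring).
  rewrite Cmod_R. exact (HN n Hn).
Qed.

Lemma Ccvg_0_Cmod u : is_lim_seq (fun n => Cmod (u n)) 0 -> Ccvg u 0.
Proof.
  intros H eps He. apply is_lim_seq_spec in H. destruct (H (mkposreal eps He)) as [N HN].
  exists N. intros n Hn. specialize (HN n Hn). simpl in HN.
  replace (u n - 0)%C with (u n) by ring.
  rewrite Rminus_0_r, Rabs_pos_eq in HN by apply Cmod_ge_0. exact HN.
Qed.

Lemma Clim_Ccvg u L : Ccvg u L -> Clim u = L.
Proof.
  intros H. apply Ccvg_filterlim in H. unfold Clim. set (F := filtermap u eventually).
  assert (HF : ProperFilter F) by (apply filtermap_proper_filter; apply eventually_filter).
  assert (Hc : cauchy F).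
  { intros e. exists L. apply H. exists e. auto. }
  symmetry. apply (@is_filter_lim_unique _ C_NormedModule F);
    [exact (Proper_StrongProper _ HF) | exact H |].
  intros P [eps He]. generalize (@complete_cauchy C_CompleteNormedModule F HF Hc eps).
  apply filter_imp. exact He.
Qed.

Lemma Cpsum_sum_n u n : Cpsum u n = sum_n u n.
Proof.
  induction n as [|n IH]; simpl; [rewrite sum_O | rewrite sum_Sn, IH]; reflexivity.
Qed.

Lemma Ccvg_Cseries (u : nat -> C) :
  @ex_series C_AbsRing C_NormedModule u -> Ccvg (Cpsum u) (Cseries u).
Proof.
  intros [l Hl]. apply Ccvg_filterlim in Hl.
  assert (H : Ccvg (Cpsum u) l) by (apply Ccvg_ext with (sum_n u); [|exact Hl];
    intros n; symmetry; apply Cpsum_sum_n).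
  unfold Cseries. rewrite (Clim_Ccvg _ _ H). exact H.
Qed.

Lemma Cmod_Cpsum_diff_head u v M c : (forall k, (k <= M)%nat -> Cmod (u k - v k)%C <= c) ->
  Cmod (Cpsum u M - Cpsum v M)%C <= INR (S M) * c.
Proof.
  intros H. induction M as [|M IH]; simpl Cpsum.
  - rewrite Rmult_1_l. apply H; lia.
  - replace (Cpsum u M + u (S M) - (Cpsum v M + v (S M)))%C
      with ((Cpsum u M - Cpsum v M) + (u (S M) - v (S M)))%C by ring.
    eapply Rle_trans; [apply Cmod_triangle|]. rewrite S_INR.
    specialize (IH (fun k Hk => H k ltac:(lia))). specialize (H (S M) (le_n _)). lra.
Qed.

Lemma Cmod_Cpsum_diff_tail u v D M p :
  (forall k, Cmod (u k) <= D k) -> (forall k, Cmod (v k) <= D k) ->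
  Cmod (Cpsum u (M + p) - Cpsum v (M + p))%C
  <= Cmod (Cpsum u M - Cpsum v M)%C + 2 * sum_n_m D (S M) (M + p).
Proof.
  intros Hu Hv. induction p as [|p IH].
  - rewrite Nat.add_0_r, sum_n_m_zero by lia. change zero with 0. lra.
  - rewrite Nat.add_succ_r, sum_n_Sm by lia. simpl Cpsum. change plus with Rplus.
    replace (Cpsum u (M + p) + u (S (M + p)) - (Cpsum v (M + p) + v (S (M + p))))%C
      with ((Cpsum u (M + p) - Cpsum v (M + p)) + (u (S (M + p)) + - v (S (M + p))))%C by ring.
    pose proof (Cmod_triangle (u (S (M + p))) (- v (S (M + p)))%C) as Huv.
    rewrite Cmod_opp in Huv. specialize (Hu (S (M + p))). specialize (Hv (S (M + p))).
    eapply Rle_trans; [apply Cmod_triangle|]. lra.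
Qed.

Lemma Cmod_lim_diff_le (u v : nat -> C) a b (M : nat) e : Ccvg u a -> Ccvg v b ->
  (forall p, Cmod (u (M + p)%nat - v (M + p)%nat)%C <= e) -> Cmod (a - b)%C <= e.
Proof.
  intros Hu Hv H. apply le_epsilon. intros eps He.
  destruct (Hu (eps / 2) ltac:(lra)) as [N1 H1]. destruct (Hv (eps / 2) ltac:(lra)) as [N2 H2].
  specialize (H1 (M + (N1 + N2))%nat ltac:(lia)). specialize (H2 (M + (N1 + N2))%nat ltac:(lia)).
  specialize (H (N1 + N2)%nat).
  set (x := u (M + (N1 + N2))%nat) in *. set (y := v (M + (N1 + N2))%nat) in *.
  replace (a - b)%C with ((x - y) + - (x - a) + (y - b))%C by ring.
  pose proof (Cmod_triangle ((x - y) + - (x - a)) (y - b))%C as H3.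
  pose proof (Cmod_triangle (x - y) (- (x - a)))%C as H4.
  rewrite Cmod_opp in H4. lra.
Qed.

Definition cvg_unif_on (K : C -> Prop) (f : nat -> C -> C) (g : C -> C) : Prop :=
  forall eps : R, 0 < eps -> exists N : nat, forall n : nat, (N <= n)%nat ->
    forall z, K z -> Cmod (f n z - g z)%C < eps.

Lemma eventually_forall_lt (P : nat -> nat -> Prop) m :
  (forall j, (j < m)%nat -> eventually (P j)) ->
  eventually (fun n => forall j, (j < m)%nat -> P j n).
Proof.
  induction m as [|m IH]; intros H.
  - exists O. intros. lia.
  - destruct (IH (fun j Hj => H j ltac:(lia))) as [N1 H1].
    destruct (H m (Nat.lt_succ_diag_r m)) as [N2 H2].
    exists (max N1 N2). intros n Hn j Hj.
    destruct (Nat.eq_dec j m) as [->|Hne]; [apply H2 | apply H1]; lia.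
Qed.

Lemma cvg_unif_on_Cseries (K : C -> Prop) (T : nat -> C -> nat -> C) (Tinf : C -> nat -> C)
  (D : nat -> R) (N0 : nat) :
  (forall k, cvg_unif_on K (fun n z => T n z k) (fun z => Tinf z k)) ->
  (forall n z k, (N0 <= n)%nat -> K z -> Cmod (T n z k) <= D k) ->
  (forall z k, K z -> Cmod (Tinf z k) <= D k) ->
  ex_series D ->
  cvg_unif_on K (fun n z => Cseries (T n z)) (fun z => Cseries (Tinf z)).
Proof.
  intros HT HD HDinf HDs eps He.
  destruct (Cauchy_ex_series D HDs (mkposreal (eps / 8) ltac:(lra))) as [M HM].
  assert (HSM : 0 < INR (S M)) by (apply lt_0_INR; lia).
  set (c := eps / (8 * INR (S M))).
  destruct (eventually_forall_lt
    (fun k n => forall z, K z -> Cmod (T n z k - Tinf z k)%C < c) (S M)) as [N1 HN1].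
  { intros k _. apply HT. unfold c. apply Rdiv_lt_0_compat; lra. }
  exists (max N0 N1). intros n Hn z Hz.
  set (u := T n z). set (v := Tinf z).
  assert (Hu : forall k, Cmod (u k) <= D k) by (intros; apply HD; auto; lia).
  assert (Hv : forall k, Cmod (v k) <= D k) by (intros; apply HDinf; auto).
  assert (Hhead : Cmod (Cpsum u M - Cpsum v M)%C <= eps / 8).
  { replace (eps / 8) with (INR (S M) * c) by (unfold c; field; lra).
    apply Cmod_Cpsum_diff_head. intros k Hk. left. apply HN1; auto; lia. }
  assert (Htail : forall p, sum_n_m D (S M) (M + p) <= eps / 8).
  { intros p. left. eapply Rle_lt_trans; [apply Rle_abs | apply (HM (S M) (M + p)%nat); lia]. }
  apply Rle_lt_trans with (3 * eps / 8); [|lra].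
  apply (Cmod_lim_diff_le (Cpsum u) (Cpsum v) _ _ M).
  - apply Ccvg_Cseries, (ex_series_le u D); auto.
  - apply Ccvg_Cseries, (ex_series_le v D); auto.
  - intros p. eapply Rle_trans; [apply (Cmod_Cpsum_diff_tail u v D); auto|].
    specialize (Htail p). lra.
Qed.

Lemma pow_le_1 q j : 0 <= q <= 1 -> q ^ j <= 1.
Proof. intros H. rewrite <- (pow1 j). apply pow_incr. lra. Qed.

Lemma Cmod_qpoch_factor_le x q j : 0 <= q <= 1 ->
  Cmod (1 - x * RtoC (q ^ j))%C <= 1 + Cmod x.
Proof.
  intros Hq. unfold Cminus. eapply Rle_trans; [apply Cmod_triangle|].
  rewrite Cmod_1, Cmod_opp, Cmod_mult, Cmod_R, Rabs_pos_eq by (apply pow_le; lra).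
  pose proof (Cmod_ge_0 x). pose proof (pow_le_1 q j Hq). nra.
Qed.

Lemma Cmod_qpoch_factor_ge x q j : 0 <= q ->
  1 - Cmod x * q ^ j <= Cmod (1 - x * RtoC (q ^ j))%C.
Proof.
  intros Hq. pose proof (Cmod_triangle (1 - x * RtoC (q ^ j)) (x * RtoC (q ^ j)))%C as H.
  replace (1 - x * RtoC (q ^ j) + x * RtoC (q ^ j))%C with (RtoC 1) in H by ring.
  rewrite Cmod_1, Cmod_mult, Cmod_R, Rabs_pos_eq in H by (apply pow_le; lra). lra.
Qed.

Lemma Cmod_qpoch_le x q k : 0 <= q <= 1 -> Cmod (qpoch x q k) <= (1 + Cmod x) ^ k.
Proof.
  intros Hq. induction k as [|k IH]; simpl; [rewrite Cmod_1; lra|].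
  rewrite Cmod_mult, Rmult_comm.
  apply Rmult_le_compat; auto using Cmod_ge_0, Cmod_qpoch_factor_le.
Qed.

Lemma Cmod_qpoch_ge x q k d : 0 <= d ->
  (forall j, d <= Cmod (1 - x * RtoC (q ^ j))%C) -> d ^ k <= Cmod (qpoch x q k).
Proof.
  intros Hd H. induction k as [|k IH]; simpl; [rewrite Cmod_1; lra|].
  rewrite Cmod_mult, Rmult_comm. apply Rmult_le_compat; auto using pow_le.
Qed.

Lemma Cmod_qpoch_q_ge q k : 0 < q < 1 -> (1 - q) ^ k <= Cmod (qpoch (RtoC q) q k).
Proof.
  intros Hq. apply Cmod_qpoch_ge; [lra|]. intros j.
  eapply Rle_trans; [|apply Cmod_qpoch_factor_ge; lra].
  rewrite Cmod_R, Rabs_pos_eq by lra. pose proof (pow_le_1 q j ltac:(lra)). nra.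
Qed.

Lemma Ccvg_qpoch (g : nat -> C) q k : Ccvg g 0 -> Ccvg (fun n => qpoch (g n) q k) 1.
Proof.
  intros Hg. induction k as [|k IH].
  - exact (Ccvg_const (RtoC 1)).
  - assert (Hfac : Ccvg (fun n => 1 + g n * - RtoC (q ^ k))%C (1 + 0 * - RtoC (q ^ k))%C).
    { apply Ccvg_plus; [apply Ccvg_const | apply Ccvg_mult; [exact Hg | apply Ccvg_const]]. }
    replace (1 + 0 * - RtoC (q ^ k))%C with (RtoC 1) in Hfac by ring.
    replace (RtoC 1) with (1 * 1)%C by ring.
    apply Ccvg_ext with (fun n => qpoch (g n) q k * (1 + g n * - RtoC (q ^ k)))%C.
    + intros n. simpl. f_equal. ring.
    + apply Ccvg_mult; assumption.
Qed.

Lemma Cmod_qpoch_list_le l q k P : (forall x, In x l -> Cmod (qpoch x q k) <= P) ->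
  Cmod (qpoch_list l q k) <= P ^ length l.
Proof.
  induction l as [|x l IH]; intros H; simpl; [rewrite Cmod_1; lra|].
  rewrite Cmod_mult. apply Rmult_le_compat; auto using Cmod_ge_0; [apply H; now left|].
  apply IH. intros y Hy. apply H. now right.
Qed.

Lemma Cmod_qpoch_list_ge l q k P : 0 <= P -> (forall x, In x l -> P <= Cmod (qpoch x q k)) ->
  P ^ length l <= Cmod (qpoch_list l q k).
Proof.
  intros HP. induction l as [|x l IH]; intros H; simpl; [rewrite Cmod_1; lra|].
  rewrite Cmod_mult. apply Rmult_le_compat; auto using pow_le; [apply H; now left|].
  apply IH. intros y Hy. apply H. now right.
Qed.

Lemma Ccvg_qpoch_list (f : nat -> nat -> C) (l : list nat) q k :
  (forall j, In j l -> Ccvg (fun n => f n j) 0) ->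
  Ccvg (fun n => qpoch_list (map (f n) l) q k) 1.
Proof.
  induction l as [|j l IH]; intros H.
  - exact (Ccvg_const (RtoC 1)).
  - replace (RtoC 1) with (1 * 1)%C by ring. apply Ccvg_mult.
    + apply Ccvg_qpoch, H. now left.
    + apply IH. intros i Hi. apply H. now right.
Qed.

Lemma exists_pow_le q c : 0 < q < 1 -> 0 < c -> exists J, q ^ J <= c.
Proof.
  intros Hq Hc. destruct (pow_lt_1_zero q ltac:(rewrite Rabs_pos_eq; lra) c Hc) as [N HN].
  exists N. specialize (HN N (le_n N)). rewrite Rabs_pos_eq in HN by (apply pow_le; lra). lra.
Qed.

Fixpoint rqpoch (x q : R) (k : nat) : R :=
  match k with O => 1 | S k' => rqpoch x q k' * (1 - x * q ^ k') end.

Lemma qpoch_RtoC x q k : qpoch (RtoC x) q k = RtoC (rqpoch x q k).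
Proof.
  induction k as [|k IH]; [reflexivity|]. simpl. rewrite IH.
  unfold RtoC, Cmult, Cminus, Cplus, Copp; simpl; f_equal; ring.
Qed.

Lemma rqpoch_add x q J k : rqpoch x q (k + J) = rqpoch x q J * rqpoch (x * q ^ J) q k.
Proof.
  induction k as [|k IH]; simpl; [ring|]. rewrite IH, pow_add. ring.
Qed.

Lemma rqpoch_neq_0 x q J : (forall j, x * q ^ j <> 1) -> rqpoch x q J <> 0.
Proof.
  intros H. induction J as [|J IH]; simpl; [lra|].
  apply Rmult_integral_contrapositive_currified; auto. specialize (H J). lra.
Qed.

(* Weierstrass' inequality [prod_(j<k) (1 - y q^j) >= 1 - sum_(j<k) y q^j]. *)
Lemma rqpoch_small_bounds y q k : 0 < q < 1 -> 0 <= y <= (1 - q) / 2 ->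
  0 <= rqpoch y q k <= 1 /\ 1 - y * (1 - q ^ k) / (1 - q) <= rqpoch y q k.
Proof.
  intros Hq Hy. induction k as [|k [[H0 H1] H2]].
  - simpl. unfold Rdiv. rewrite Rminus_diag, Rmult_0_r, Rmult_0_l. lra.
  - simpl rqpoch. pose proof (pow_le_1 q k ltac:(lra)). pose proof (pow_lt q k ltac:(lra)).
    assert (1 - y * (1 - q ^ S k) / (1 - q) = 1 - y * (1 - q ^ k) / (1 - q) - y * q ^ k)
      as -> by (simpl; field; lra).
    assert (0 <= y * q ^ k <= 1 / 2) by (split; nra).
    repeat split; nra.
Qed.

Lemma ex_lim_rqpoch_small y q : 0 < q < 1 -> 0 <= y <= (1 - q) / 2 ->
  exists l, 1 / 2 <= l /\ is_lim_seq (rqpoch y q) l.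
Proof.
  intros Hq Hy.
  assert (Hge : forall n, 1 / 2 <= rqpoch y q n).
  { intros n. destruct (rqpoch_small_bounds y q n Hq Hy) as [_ H].
    pose proof (pow_lt q n ltac:(lra)).
    assert (y * (1 - q ^ n) / (1 - q) <= 1 / 2); [|lra].
    apply Rmult_le_reg_r with (1 - q); [lra|]. unfold Rdiv.
    rewrite Rmult_assoc, Rinv_l by lra. nra. }
  assert (Hdecr : forall n, rqpoch y q (S n) <= rqpoch y q n).
  { intros n. destruct (rqpoch_small_bounds y q n Hq Hy) as [[H0 _] _]. simpl.
    assert (0 <= y * q ^ n) by (apply Rmult_le_pos; [lra | apply pow_le; lra]). nra. }
  destruct (ex_finite_lim_seq_decr _ _ Hdecr Hge) as [l Hl].
  exists l. split; [|exact Hl].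
  exact (is_lim_seq_le _ _ (1 / 2) l Hge (is_lim_seq_const _) Hl).
Qed.

Lemma qpoch_inf_RtoC_neq_0 x q : 0 < q < 1 -> 0 < x -> (forall j, x * q ^ j <> 1) ->
  qpoch_inf (RtoC x) q <> RtoC 0.
Proof.
  intros Hq Hx Hne.
  destruct (exists_pow_le q ((1 - q) / 2 / x) Hq) as [J HJ]; [apply Rdiv_lt_0_compat; lra|].
  assert (Hy : 0 <= x * q ^ J <= (1 - q) / 2).
  { split; [apply Rmult_le_pos; [lra | apply pow_le; lra]|].
    apply Rmult_le_compat_l with (r := x) in HJ; [|lra].
    replace (x * ((1 - q) / 2 / x)) with ((1 - q) / 2) in HJ by (field; lra). exact HJ. }
  destruct (ex_lim_rqpoch_small _ q Hq Hy) as [l [Hl Hlim]].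
  assert (Hprod : is_lim_seq (rqpoch x q) (rqpoch x q J * l)).
  { apply (is_lim_seq_incr_n _ J).
    apply is_lim_seq_ext with (fun n => rqpoch x q J * rqpoch (x * q ^ J) q n).
    - intros n. symmetry. apply rqpoch_add.
    - exact (is_lim_seq_scal_l _ _ _ Hlim). }
  unfold qpoch_inf. rewrite (Clim_Ccvg _ (RtoC (rqpoch x q J * l))).
  - intros H. injection H. apply Rmult_integral_contrapositive_currified; [|lra].
    apply rqpoch_neq_0, Hne.
  - apply Ccvg_ext with (fun n => RtoC (rqpoch x q n)).
    + intros n. symmetry. apply qpoch_RtoC.
    + apply Ccvg_RtoC, Hprod.
Qed.

Lemma Carg_range w : - PI < Carg w <= PI.
Proof.
  pose proof PI_RGT_0. destruct w as [x y]. unfold Carg; cbn [fst snd].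
  pose proof (atan_bound (y / x)) as Hb.
  assert (Hsign : forall t, (t <= 0 -> atan t <= 0) /\ (0 < t -> 0 < atan t)).
  { intros t. split; intros Ht; rewrite <- atan_0.
    - destruct (Req_dec t 0) as [->|]; [lra | left; apply atan_increasing; lra].
    - apply atan_increasing; lra. }
  destruct (Rlt_dec 0 x); [lra|]. destruct (Rlt_dec x 0).
  - assert (/ x < 0) by (apply Rinv_lt_0_compat; lra). unfold Rdiv in *.
    destruct (Rle_dec 0 y).
    + assert (atan (y * / x) <= 0) by (apply (proj1 (Hsign _)); nra). lra.
    + assert (0 < atan (y * / x)) by (apply (proj2 (Hsign _)); nra). lra.
  - destruct (Rlt_dec 0 y); [lra|]. destruct (Rlt_dec y 0); lra.
Qed.

Lemma Cmod_cos_sin_Carg w : w <> RtoC 0 ->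
  Cmod w * cos (Carg w) = fst w /\ Cmod w * sin (Carg w) = snd w.
Proof.
  destruct w as [x y]. intros Hw. unfold Carg, Cmod; cbn [fst snd].
  replace (x ^ 2 + y ^ 2) with (x * x + y * y) by ring.
  assert (Hs : 0 < sqrt (1 + (y / x) * (y / x))) by (apply sqrt_lt_R0; nra).
  assert (Hscale : forall t, t * t = x * x ->
            sqrt (x * x + y * y) = t * sqrt (1 + (y / x) * (y / x)) \/ t <= 0).
  { intros t Ht. destruct (Rle_lt_dec t 0) as [|Htp]; [now right | left].
    rewrite <- (sqrt_square t) by lra. rewrite <- sqrt_mult by nra.
    f_equal. rewrite Ht. field. intro; subst; nra. }
  pose proof (cos_atan (y / x)) as Hc. pose proof (sin_atan (y / x)) as Hsn.
  unfold Rsqr in Hc, Hsn.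
  destruct (Rlt_dec 0 x).
  - destruct (Hscale x eq_refl) as [->|]; [|lra].
    rewrite Hc, Hsn. split; field; lra.
  - destruct (Rlt_dec x 0).
    + destruct (Hscale (- x) ltac:(ring)) as [->|]; [|lra].
      destruct (Rle_dec 0 y).
      * rewrite cos_plus, sin_plus, cos_PI, sin_PI, Hc, Hsn. split; field; lra.
      * rewrite cos_minus, sin_minus, cos_PI, sin_PI, Hc, Hsn. split; field; lra.
    + assert (x = 0) by lra. subst x.
      replace (0 * 0 + y * y) with (y * y) by ring. rewrite <- Rsqr_def, sqrt_Rsqr_abs.
      destruct (Rlt_dec 0 y).
      * rewrite cos_PI2, sin_PI2, Rabs_pos_eq by lra. split; ring.
      * destruct (Rlt_dec y 0).
        -- rewrite cos_neg, sin_neg, cos_PI2, sin_PI2, Rabs_left by lra. split; ring.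
        -- exfalso. apply Hw. assert (y = 0) by lra. subst. reflexivity.
Qed.

Lemma Cexp_Clog w : w <> RtoC 0 -> Cexp (Clog w) = w.
Proof.
  intros Hw. destruct (Cmod_cos_sin_Carg w Hw) as [H1 H2].
  assert (0 < Cmod w) by (apply Cmod_gt_0; auto).
  unfold Cexp, Clog; cbn [fst snd]. rewrite exp_ln, H1, H2 by auto. destruct w; reflexivity.
Qed.

Lemma Carg_scale r w : 0 < r -> Carg (RtoC r * w)%C = Carg w.
Proof.
  intros Hr. destruct w as [x y].
  replace (RtoC r * (x, y))%C with ((r * x, r * y) : C)
    by (unfold Cmult, RtoC; cbn; f_equal; ring).
  unfold Carg; cbn [fst snd].
  replace (r * y / (r * x)) with (y / x).
  2:{ destruct (Req_dec x 0) as [->|Hx].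
      - unfold Rdiv. rewrite Rmult_0_r, !Rinv_0. ring.
      - field. lra. }
  destruct (Rlt_dec 0 (r * x)), (Rlt_dec 0 x); try (exfalso; nra); auto.
  destruct (Rlt_dec (r * x) 0), (Rlt_dec x 0); try (exfalso; nra); auto.
  - destruct (Rle_dec 0 (r * y)), (Rle_dec 0 y); try (exfalso; nra); auto.
  - destruct (Rlt_dec 0 (r * y)), (Rlt_dec 0 y); try (exfalso; nra); auto.
    destruct (Rlt_dec (r * y) 0), (Rlt_dec y 0); try (exfalso; nra); auto.
Qed.

Lemma Clog_scale r w : 0 < r -> w <> RtoC 0 -> Clog (RtoC r * w)%C = (RtoC (ln r) + Clog w)%C.
Proof.
  intros Hr Hw. assert (0 < Cmod w) by (apply Cmod_gt_0; auto).
  unfold Clog. rewrite Carg_scale, Cmod_mult, Cmod_R, Rabs_pos_eq, ln_mult by lra.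
  unfold RtoC, Cplus; cbn. f_equal. ring.
Qed.

Lemma Carg_Cexp x y : - (PI / 2) < y <= PI / 2 -> Carg (Cexp (x, y)) = y.
Proof.
  intros Hy. unfold Cexp, Carg; cbn [fst snd]. pose proof (exp_pos x).
  destruct (Req_dec y (PI / 2)) as [->|Hne].
  - rewrite cos_PI2, sin_PI2, Rmult_0_r, Rmult_1_r.
    destruct (Rlt_dec 0 0), (Rlt_dec 0 0), (Rlt_dec 0 (exp x)); lra.
  - assert (Hc : 0 < cos y) by (apply cos_gt_0; lra).
    destruct (Rlt_dec 0 (exp x * cos y)); [|exfalso; nra].
    replace (exp x * sin y / (exp x * cos y)) with (tan y) by (unfold tan; field; lra).
    apply atan_tan. lra.
Qed.

Lemma Clog_csqrt w : w <> RtoC 0 -> Clog (csqrt w) = (RtoC (1 / 2) * Clog w)%C.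
Proof.
  intros Hw. pose proof (Carg_range w).
  unfold csqrt, cpow. rewrite Cmult_comm.
  replace (Clog w * RtoC (1 / 2))%C with ((1 / 2 * ln (Cmod w), 1 / 2 * Carg w) : C)
    by (unfold Clog, Cmult, RtoC; cbn; f_equal; ring).
  unfold Clog at 1. rewrite Cmod_Cexp, Carg_Cexp by lra. cbn [fst]. rewrite ln_exp.
  unfold Clog, Cmult, RtoC; cbn. f_equal; ring.
Qed.

Lemma csqrt_mul_self w : w <> RtoC 0 -> (csqrt w * csqrt w)%C = w.
Proof.
  intros Hw. rewrite <- (Cexp_Clog w Hw) at 3. unfold csqrt, cpow. rewrite <- Cexp_plus.
  f_equal. destruct (Clog w). unfold RtoC, Cmult, Cplus; cbn. f_equal; field.
Qed.

(* The branches are compatible because [Log (csqrt w) = Log w / 2] (lemma [Clog_csqrt]). *)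
Lemma power_prefactors_cancel q alpha w : 0 < q < 1 -> w <> RtoC 0 ->
  (cpow (RtoC (/ (q - 1) ^ 2) * w) (RtoC ((1 - alpha) / 2))
   * qpow (1 - q) (RtoC (1 - alpha)) * cpow (csqrt w) (RtoC (alpha - 1)))%C = RtoC 1.
Proof.
  intros Hq Hw. assert (Hq1 : 0 < (q - 1) ^ 2) by (simpl; nra).
  assert (Hln : ln (/ (q - 1) ^ 2) = - (2 * ln (1 - q))).
  { rewrite ln_Rinv by exact Hq1. replace ((q - 1) ^ 2) with ((1 - q) ^ 2) by ring.
    rewrite ln_pow by lra. simpl INR. ring. }
  unfold cpow, qpow. rewrite Clog_scale, Clog_csqrt by (auto; apply Rinv_0_lt_compat; lra).
  rewrite <- !Cexp_plus.
  replace (RtoC 1) with (Cexp (RtoC 0)) by (rewrite Cexp_RtoC, exp_0; reflexivity). f_equal.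
  rewrite Hln. destruct (Clog w). unfold RtoC, Cmult, Cplus; cbn. f_equal; field.
Qed.

Lemma phi01_closed_form (q alpha : R) (z : C) : 0 < q < 1 -> (forall m : nat, alpha <> - INR m) ->
  z <> RtoC 0 ->
  phi nil (qpow q (RtoC alpha) :: nil) q z =
  Cmult (cpow (Cdiv (Copp z) (Cmult (RtoC ((q - 1) ^ 2)) (qpow q (RtoC alpha))))
              (RtoC ((1 - alpha) / 2)))
    (Cmult (qGamma q (RtoC alpha))
       (J2 (RtoC (alpha - 1))
           (Cmult (RtoC 2) (csqrt (Cdiv (Copp z) (qpow q (RtoC alpha))))) q)).
Proof.
  intros Hq Hal Hz. unfold qGamma, J2.
  replace (RtoC (alpha - 1) + RtoC 1)%C with (RtoC alpha)
    by (unfold RtoC, Cplus; cbn; f_equal; ring).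
  rewrite qpow_RtoC. set (Q := exp (ln q * alpha)).
  assert (HQ : RtoC Q <> RtoC 0) by (intros H; injection H; apply Rgt_not_eq, exp_pos).
  set (w := (- z / RtoC Q)%C).
  assert (Hw : w <> RtoC 0).
  { intros H. apply Hz. replace z with (- (w * RtoC Q))%C by (unfold w; field; auto).
    rewrite H. ring. }
  assert (Harg : (- (RtoC Q * (RtoC 2 * csqrt w * (RtoC 2 * csqrt w))) / RtoC 4)%C = z).
  { replace (RtoC 2 * csqrt w * (RtoC 2 * csqrt w))%C with (RtoC 4 * (csqrt w * csqrt w))%C
      by (unfold RtoC, Cmult; cbn; f_equal; ring).
    rewrite csqrt_mul_self by exact Hw. unfold w. field.
    exact HQ. }
  assert (Hq2 : RtoC ((q - 1) ^ 2) <> RtoC 0) by (intros H; injection H; simpl; nra).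
  replace (- z / (RtoC ((q - 1) ^ 2) * RtoC Q))%C with (RtoC (/ (q - 1) ^ 2) * w)%C
    by (unfold w; rewrite RtoC_inv by (simpl; nra); field; auto).
  replace (RtoC 2 * csqrt w / RtoC 2)%C with (csqrt w) by (field; intros H; injection H; lra).
  replace (RtoC 1 - RtoC alpha)%C with (RtoC (1 - alpha))
    by (unfold RtoC, Cminus, Cplus, Copp; cbn; f_equal; ring).
  rewrite Harg. fold (phi nil (RtoC Q :: nil) q z).
  assert (HqQ : qpoch_inf (RtoC q) q <> RtoC 0).
  { apply qpoch_inf_RtoC_neq_0; try lra. intros j.
    change (q * q ^ j) with (q ^ S j).
    pose proof (pow_lt_1_compat q (S j) ltac:(lra) ltac:(lia)). lra. }
  assert (HQQ : qpoch_inf (RtoC Q) q <> RtoC 0).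
  { apply qpoch_inf_RtoC_neq_0; [lra | apply exp_pos |].
    intros j. apply exp_ln_mul_pow_neq_1; assumption. }
  set (P := phi nil (RtoC Q :: nil) q z).
  rewrite <- (Cmult_1_l P) at 1. rewrite <- (power_prefactors_cancel q alpha w Hq Hw).
  field. auto.
Qed.

Definition binom2 (k : nat) : nat := Nat.div (k * (k - 1)) 2.

Lemma binom2_S k : binom2 (S k) = (binom2 k + k)%nat.
Proof.
  unfold binom2. replace (S k * (S k - 1))%nat with (k * (k - 1) + k * 2)%nat.
  - rewrite Nat.div_add by lia. reflexivity.
  - destruct k; simpl; nia.
Qed.

Definition qsgn (q : R) (k : nat) : R := (-1) ^ k * q ^ binom2 k.

Lemma Rabs_qsgn q k : 0 < q -> Rabs (qsgn q k) = q ^ binom2 k.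
Proof.
  intros Hq. unfold qsgn. rewrite Rabs_mult, pow_1_abs, Rabs_pos_eq by (apply pow_le; lra).
  ring.
Qed.

Lemma ex_series_qbinom2 q G : 0 < q < 1 -> 0 < G -> ex_series (fun k => q ^ binom2 k * G ^ k).
Proof.
  intros Hq HG. set (u k := q ^ binom2 k * G ^ k).
  assert (Hu : forall k, 0 < u k) by (intros k; apply Rmult_lt_0_compat; apply pow_lt; lra).
  apply ex_series_ext with (fun k => Rabs (u k)); [intros k; apply Rabs_pos_eq, Rlt_le, Hu|].
  apply (ex_series_DAlembert u 0); [lra | intros k; apply Rgt_not_eq, Hu|].
  apply is_lim_seq_ext with (fun k => q ^ k * G).
  - intros k. unfold u. rewrite binom2_S, pow_add. simpl (G ^ S k).
    rewrite Rabs_pos_eq; [field; split; apply Rgt_not_eq, pow_lt; lra|].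
    apply Rmult_le_pos; [|left; apply Rinv_0_lt_compat, Hu].
    apply Rmult_le_pos; apply Rmult_le_pos; try apply pow_le; lra.
  - replace (Finite 0) with (Rbar_mult 0 G) by (simpl; f_equal; ring).
    apply is_lim_seq_scal_r, is_lim_seq_geom. rewrite Rabs_pos_eq; lra.
Qed.

(* The substitution [z := q^n z] turns the factor [(q^-n; q)_k] of the k-th term into this
   bounded product (lemma [qpoch_qpow_neg]). *)
Fixpoint prod_qpow_diff (q : R) (n k : nat) : R :=
  match k with O => 1 | S k' => prod_qpow_diff q n k' * (q ^ n - q ^ k') end.

Lemma qpoch_qpow_neg q n k : 0 < q ->
  qpoch (qpow q (RtoC (- INR n))) q k = (RtoC (prod_qpow_diff q n k) / RtoC ((q ^ n) ^ k))%C.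
Proof.
  intros Hq. assert (Hqn : 0 < q ^ n) by (apply pow_lt; auto).
  assert (Hinv : qpow q (RtoC (- INR n)) = RtoC (/ q ^ n)).
  { rewrite qpow_RtoC, pow_exp_ln, <- exp_Ropp by exact Hq. f_equal. f_equal. ring. }
  assert (Hqnk : forall k, (q ^ n) ^ k <> 0) by (intros; apply pow_nonzero; lra).
  rewrite Hinv, qpoch_RtoC, <- RtoC_div by apply Hqnk. f_equal.
  induction k as [|k IH]; simpl; [field|]. rewrite IH. field. split; [apply Hqnk | lra].
Qed.

Lemma Rabs_prod_qpow_diff_le q n k : 0 < q <= 1 -> Rabs (prod_qpow_diff q n k) <= 1.
Proof.
  intros Hq. induction k as [|k IH]; simpl; [rewrite Rabs_R1; lra|].
  rewrite Rabs_mult. pose proof (pow_le_1 q n ltac:(lra)). pose proof (pow_le_1 q k ltac:(lra)).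
  pose proof (pow_lt q n ltac:(lra)). pose proof (pow_lt q k ltac:(lra)).
  assert (Rabs (q ^ n - q ^ k) <= 1) by (apply Rabs_le; lra).
  pose proof (Rabs_pos (prod_qpow_diff q n k)). pose proof (Rabs_pos (q ^ n - q ^ k)). nra.
Qed.

Lemma is_lim_prod_qpow_diff q k : 0 < q < 1 ->
  is_lim_seq (fun n => prod_qpow_diff q n k) (qsgn q k).
Proof.
  intros Hq. induction k as [|k IH].
  - apply is_lim_seq_ext with (fun _ => 1); [reflexivity|].
    unfold qsgn. simpl. rewrite Rmult_1_l. apply is_lim_seq_const.
  - replace (qsgn q (S k)) with (qsgn q k * (0 - q ^ k))
      by (unfold qsgn; rewrite binom2_S, pow_add; simpl; ring).
    apply is_lim_seq_mult'; [exact IH|].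
    apply is_lim_seq_minus'; [|apply is_lim_seq_const].
    apply is_lim_seq_geom. rewrite Rabs_pos_eq; lra.
Qed.

Definition shifted_param (q : R) (a : nat -> R) (b : nat -> C) (n j : nat) : C :=
  qpow q (RtoC (a j * INR n) + b j)%C.

Lemma Cmod_shifted_param q a b n j :
  Cmod (shifted_param q a b n j) = exp (ln q * fst (b j)) * exp (ln q * a j) ^ n.
Proof.
  unfold shifted_param.
  rewrite Cmod_qpow, (pow_exp_ln (exp _)), ln_exp, <- exp_plus by apply exp_pos.
  simpl. f_equal. ring.
Qed.

Lemma Cmod_shifted_param_le q a b n j : 0 < q < 1 -> 0 < a j ->
  Cmod (shifted_param q a b n j) <= exp (ln q * fst (b j)).
Proof.
  intros Hq Ha. rewrite Cmod_shifted_param. pose proof (exp_ln_lt_1 q (a j) Hq Ha).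
  pose proof (exp_pos (ln q * fst (b j))). pose proof (pow_le_1 (exp (ln q * a j)) n ltac:(lra)).
  nra.
Qed.

Lemma Ccvg_shifted_param q a b j : 0 < q < 1 -> 0 < a j ->
  Ccvg (fun n => shifted_param q a b n j) 0.
Proof.
  intros Hq Ha. apply Ccvg_0_Cmod.
  apply is_lim_seq_ext with (fun n => exp (ln q * fst (b j)) * exp (ln q * a j) ^ n).
  - intros n. symmetry. apply Cmod_shifted_param.
  - replace (Finite 0) with (Rbar_mult (exp (ln q * fst (b j))) 0) by (simpl; f_equal; ring).
    apply is_lim_seq_scal_l, is_lim_seq_geom.
    pose proof (exp_ln_lt_1 q (a j) Hq Ha). rewrite Rabs_pos_eq; lra.
Qed.

Definition shifted_coef q Q a b c d m n k : C :=
  (RtoC (prod_qpow_diff q n k * qsgn q k) * qpoch_list (map (shifted_param q a b n) (seq 0 m)) q k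
   * / (qpoch (RtoC Q) q k * qpoch_list (map (shifted_param q c d n) (seq 0 m)) q k)
   * / qpoch (RtoC q) q k)%C.

Definition phi01_coef q Q k : C :=
  (RtoC (qsgn q k * qsgn q k) * / qpoch (RtoC Q) q k * / qpoch (RtoC q) q k)%C.

Lemma phi_term_shifted q Q a b c d m n z k : 0 < q ->
  phi_term (qpow q (RtoC (- INR n)) :: map (shifted_param q a b n) (seq 0 m))
    (RtoC Q :: map (shifted_param q c d n) (seq 0 m)) q (RtoC (q ^ n) * z)%C k
  = (Cpow z k * shifted_coef q Q a b c d m n k)%C.
Proof.
  intros Hq. unfold phi_term, shifted_coef, Cdiv. cbv zeta. simpl length.
  rewrite !length_map, length_seq, Z.add_simpl_r, powerRZ_1.
  change ((-1) ^ k * q ^ Nat.div (k * (k - 1)) 2) with (qsgn q k).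
  simpl qpoch_list. rewrite qpoch_qpow_neg, Cpow_mult_l, <- RtoC_pow, !RtoC_mult by exact Hq.
  assert (HW : RtoC ((q ^ n) ^ k) <> RtoC 0)
    by (intros H; injection H; apply pow_nonzero, pow_nonzero; lra).
  set (I1 := (/ (_ * qpoch_list (map (shifted_param q c d n) (seq 0 m)) q k))%C).
  set (I2 := (/ qpoch (RtoC q) q k)%C).
  field. exact HW.
Qed.

Lemma phi_term_phi01 q Q z k :
  phi_term nil (RtoC Q :: nil) q z k = (Cpow z k * phi01_coef q Q k)%C.
Proof.
  unfold phi_term, phi01_coef, Cdiv. cbv zeta. simpl length. simpl qpoch_list.
  replace (1 + Z.of_nat 1 - Z.of_nat 0)%Z with 2%Z by reflexivity.
  rewrite Cmult_1_r. change (powerRZ ?x 2) with (x * (x * 1)).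
  change ((-1) ^ k * q ^ Nat.div (k * (k - 1)) 2) with (qsgn q k).
  rewrite Rmult_1_r. ring.
Qed.

Lemma Ccvg_shifted_coef q Q a b c d m k : 0 < q < 1 ->
  (forall j, (j < m)%nat -> 0 < a j /\ 0 < c j) -> qpoch (RtoC Q) q k <> RtoC 0 ->
  Ccvg (fun n => shifted_coef q Q a b c d m n k) (phi01_coef q Q k).
Proof.
  intros Hq Hac HQ.
  assert (Hlist : forall (e : nat -> R) f, (forall j, (j < m)%nat -> 0 < e j) ->
            Ccvg (fun n => qpoch_list (map (shifted_param q e f n) (seq 0 m)) q k) 1).
  { intros e f He. apply Ccvg_qpoch_list. intros j Hj. apply in_seq in Hj.
    apply Ccvg_shifted_param; [exact Hq | apply He; lia]. }
  assert (Hsgn : Ccvg (fun n => RtoC (prod_qpow_diff q n k * qsgn q k))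
                      (RtoC (qsgn q k * qsgn q k))).
  { apply Ccvg_RtoC, is_lim_seq_mult'; [apply is_lim_prod_qpow_diff, Hq | apply is_lim_seq_const]. }
  replace (phi01_coef q Q k)
    with (RtoC (qsgn q k * qsgn q k) * 1 * / (qpoch (RtoC Q) q k * 1) * / qpoch (RtoC q) q k)%C
    by (unfold phi01_coef; rewrite !Cmult_1_r; reflexivity).
  apply Ccvg_mult; [apply Ccvg_mult; [apply Ccvg_mult|] | apply Ccvg_const].
  - exact Hsgn.
  - apply Hlist. intros j Hj. apply Hac, Hj.
  - apply Ccvg_inv; [rewrite Cmult_1_r; exact HQ|].
    apply Ccvg_mult; [apply Ccvg_const | apply Hlist; intros j Hj; apply Hac, Hj].
Qed.

Lemma Cmod_qpoch_list_shifted_le q a b m n k B : 0 <= q <= 1 ->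
  (forall j, (j < m)%nat -> Cmod (shifted_param q a b n j) <= B) ->
  Cmod (qpoch_list (map (shifted_param q a b n) (seq 0 m)) q k) <= ((1 + B) ^ m) ^ k.
Proof.
  intros Hq HB. rewrite <- !pow_mult, Nat.mul_comm, pow_mult.
  rewrite <- (length_seq m 0) at 2. rewrite <- (length_map (shifted_param q a b n)).
  apply Cmod_qpoch_list_le. intros x Hx. apply in_map_iff in Hx.
  destruct Hx as [j [<- Hj]]. apply in_seq in Hj.
  eapply Rle_trans; [apply Cmod_qpoch_le, Hq|].
  apply pow_incr. split; [pose proof (Cmod_ge_0 (shifted_param q a b n j)); lra|].
  specialize (HB j ltac:(lia)). lra.
Qed.

Lemma Cmod_qpoch_list_shifted_ge q c d m n k : 0 <= q <= 1 ->
  (forall j, (j < m)%nat -> Cmod (shifted_param q c d n j) <= 1 / 2) ->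
  ((1 / 2) ^ m) ^ k <= Cmod (qpoch_list (map (shifted_param q c d n) (seq 0 m)) q k).
Proof.
  intros Hq HB. rewrite <- !pow_mult, Nat.mul_comm, pow_mult.
  rewrite <- (length_seq m 0) at 1. rewrite <- (length_map (shifted_param q c d n)).
  apply Cmod_qpoch_list_ge; [apply pow_le; lra|]. intros x Hx. apply in_map_iff in Hx.
  destruct Hx as [j [<- Hj]]. apply in_seq in Hj.
  apply Cmod_qpoch_ge; [lra|]. intros i.
  eapply Rle_trans; [|apply Cmod_qpoch_factor_ge; lra].
  specialize (HB j ltac:(lia)). pose proof (pow_le_1 q i Hq). pose proof (pow_le q i ltac:(lra)).
  pose proof (Cmod_ge_0 (shifted_param q c d n j)). nra.
Qed.

Lemma Rdiv_le_pow x y c A B k : 0 <= x <= c * A ^ k -> 0 <= c -> 0 <= A -> 0 < B ->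
  B ^ k <= y -> x / y <= c * (A / B) ^ k.
Proof.
  intros [Hx0 Hx] Hc HA HB Hy. assert (HBk : 0 < B ^ k) by (apply pow_lt; lra).
  unfold Rdiv. rewrite Rpow_mult_distr, pow_inv.
  apply Rle_trans with (c * A ^ k * / y).
  - apply Rmult_le_compat_r; [left; apply Rinv_0_lt_compat; lra | exact Hx].
  - rewrite Rmult_assoc. apply Rmult_le_compat_l; [exact Hc|].
    apply Rmult_le_compat_l; [apply pow_le, HA | apply Rinv_le_contravar; lra].
Qed.

Lemma Cmod_shifted_coef_le q Q a b c d m n k B dl : 0 < q < 1 -> 0 < dl -> 0 <= B ->
  (forall j, dl <= Cmod (1 - RtoC Q * RtoC (q ^ j))%C) ->
  (forall j, (j < m)%nat -> Cmod (shifted_param q a b n j) <= B) ->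
  (forall j, (j < m)%nat -> Cmod (shifted_param q c d n j) <= 1 / 2) ->
  Cmod (shifted_coef q Q a b c d m n k)
  <= q ^ binom2 k * ((1 + B) ^ m / (dl * (1 / 2) ^ m * (1 - q))) ^ k.
Proof.
  intros Hq Hdl HB HQ HA HC.
  pose proof (Cmod_qpoch_ge _ q k dl ltac:(lra) HQ) as HQk.
  pose proof (Cmod_qpoch_list_shifted_ge q c d m n k ltac:(lra) HC) as HCk.
  pose proof (Cmod_qpoch_q_ge q k Hq) as Hqk.
  pose proof (Cmod_qpoch_list_shifted_le q a b m n k B ltac:(lra) HA) as HAk.
  assert (Hpos : forall x, 0 < x -> 0 < x ^ k) by (intros; apply pow_lt; lra).
  pose proof (Hpos dl Hdl). pose proof (Hpos ((1 / 2) ^ m) (pow_lt (1 / 2) m ltac:(lra))).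
  pose proof (Hpos (1 - q) ltac:(lra)).
  assert (Hnz : forall x, 0 < Cmod x -> x <> RtoC 0) by (intros x Hx; apply Cmod_gt_0, Hx).
  unfold shifted_coef.
  set (N := (RtoC (prod_qpow_diff q n k * qsgn q k)
             * qpoch_list (map (shifted_param q a b n) (seq 0 m)) q k)%C).
  set (D1 := (qpoch (RtoC Q) q k * qpoch_list (map (shifted_param q c d n) (seq 0 m)) q k)%C).
  set (D2 := qpoch (RtoC q) q k).
  assert (HD : (D1 * D2)%C <> RtoC 0)
    by (unfold D1, D2; repeat apply Cmult_neq_0; apply Hnz; lra).
  replace (N * / D1 * / D2)%C with (N / (D1 * D2))%C
    by (field; split; intros Hz; apply HD; rewrite Hz; ring).
  rewrite Cmod_div by exact HD.
  apply Rdiv_le_pow; try (apply pow_le; lra);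
    try (apply Rmult_lt_0_compat; [apply Rmult_lt_0_compat|]; try apply pow_lt; lra).
  - split; [apply Cmod_ge_0|]. unfold N.
    rewrite Cmod_mult, Cmod_R, Rabs_mult, Rabs_qsgn by lra.
    pose proof (Rabs_prod_qpow_diff_le q n k ltac:(lra)).
    pose proof (pow_le q (binom2 k) ltac:(lra)). pose proof (Rabs_pos (prod_qpow_diff q n k)).
    pose proof (Cmod_ge_0 (qpoch_list (map (shifted_param q a b n) (seq 0 m)) q k)).
    rewrite (Rmult_comm (Rabs _) (q ^ binom2 k)), Rmult_assoc.
    apply Rmult_le_compat_l; nra.
  - unfold D1, D2. rewrite !Rpow_mult_distr, !Cmod_mult.
    apply Rmult_le_compat; [nra | lra | apply Rmult_le_compat; lra | exact Hqk].
Qed.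

Lemma Cmod_phi01_coef_le q Q k B dl m : 0 < q < 1 -> 0 < dl -> 0 <= B ->
  (forall j, dl <= Cmod (1 - RtoC Q * RtoC (q ^ j))%C) ->
  Cmod (phi01_coef q Q k) <= q ^ binom2 k * ((1 + B) ^ m / (dl * (1 / 2) ^ m * (1 - q))) ^ k.
Proof.
  intros Hq Hdl HB HQ.
  pose proof (Cmod_qpoch_ge _ q k dl ltac:(lra) HQ) as HQk.
  pose proof (Cmod_qpoch_q_ge q k Hq) as Hqk.
  pose proof (pow_lt dl k Hdl). pose proof (pow_lt (1 - q) k ltac:(lra)).
  pose proof (pow_le_1 (1 / 2) m ltac:(lra)). pose proof (pow_lt (1 / 2) m ltac:(lra)).
  assert (HD : (qpoch (RtoC Q) q k * qpoch (RtoC q) q k)%C <> RtoC 0)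
    by (apply Cmult_neq_0; apply Cmod_gt_0; lra).
  unfold phi01_coef.
  replace (RtoC (qsgn q k * qsgn q k) * / qpoch (RtoC Q) q k * / qpoch (RtoC q) q k)%C
    with (RtoC (qsgn q k * qsgn q k) / (qpoch (RtoC Q) q k * qpoch (RtoC q) q k))%C
    by (field; split; intros Hz; apply HD; rewrite Hz; ring).
  rewrite Cmod_div by exact HD.
  apply Rdiv_le_pow; try (apply pow_le; lra);
    try (apply Rmult_lt_0_compat; [apply Rmult_lt_0_compat|]; lra).
  - split; [apply Cmod_ge_0|].
    rewrite Cmod_R, Rabs_mult, Rabs_qsgn by lra.
    pose proof (pow_le_1 q (binom2 k) ltac:(lra)). pose proof (pow_le q (binom2 k) ltac:(lra)).
    assert (1 <= ((1 + B) ^ m) ^ k) by (apply pow_R1_Rle, pow_R1_Rle; lra). nra.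
  - rewrite Cmod_mult, !Rpow_mult_distr.
    assert (((1 / 2) ^ m) ^ k <= 1) by (apply pow_le_1; split; [apply pow_le|]; lra).
    pose proof (pow_lt ((1 / 2) ^ m) k H2).
    apply Rmult_le_compat; nra.
Qed.

Lemma Cmod_Cpow_mult_le z k x R M : Cmod z <= R -> Cmod x <= M ->
  Cmod (Cpow z k * x)%C <= R ^ k * M.
Proof.
  intros Hz Hx. rewrite Cmod_mult, Cmod_pow.
  apply Rmult_le_compat; auto using pow_le, Cmod_ge_0. apply pow_incr. split; auto using Cmod_ge_0.
Qed.

Lemma cvg_unif_on_Cpow_mult (X : nat -> C) (Y : C) k R : 0 <= R -> Ccvg X Y ->
  cvg_unif_on (fun z => Cmod z <= R) (fun n z => Cpow z k * X n)%C (fun z => Cpow z k * Y)%C.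
Proof.
  intros HR HX eps He. assert (HRk : 0 < R ^ k + 1) by (pose proof (pow_le R k HR); lra).
  destruct (HX (eps / (R ^ k + 1)) ltac:(apply Rdiv_lt_0_compat; lra)) as [N HN].
  exists N. intros n Hn z Hz.
  replace (Cpow z k * X n - Cpow z k * Y)%C with (Cpow z k * (X n - Y))%C by ring.
  eapply Rle_lt_trans; [apply Cmod_Cpow_mult_le; [exact Hz | left; apply HN, Hn]|].
  apply Rmult_lt_reg_r with (R ^ k + 1); [lra|].
  replace (R ^ k * (eps / (R ^ k + 1)) * (R ^ k + 1)) with (R ^ k * eps) by (field; lra).
  pose proof (pow_le R k HR). nra.
Qed.

Lemma exists_upper_bound (f : nat -> R) m : exists B, 0 <= B /\ forall j, (j < m)%nat -> f j <= B.
Proof.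
  induction m as [|m [B [HB HfB]]]; [exists 0; split; [lra | intros; lia]|].
  exists (Rmax B (f m)). split; [eapply Rle_trans; [exact HB | apply Rmax_l]|].
  intros j Hj. destruct (Nat.eq_dec j m) as [->|]; [apply Rmax_r|].
  eapply Rle_trans; [apply HfB; lia | apply Rmax_l].
Qed.

Lemma exists_pos_lower_bound (f : nat -> R) m : (forall j, (j < m)%nat -> 0 < f j) ->
  exists d, 0 < d /\ forall j, (j < m)%nat -> d <= f j.
Proof.
  induction m as [|m IH]; intros H; [exists 1; split; [lra | intros; lia]|].
  destruct IH as [d [Hd HB]]; [intros; apply H; lia|].
  exists (Rmin d (f m)). split; [apply Rmin_pos; auto|]. intros j Hj.
  destruct (Nat.eq_dec j m) as [->|]; [apply Rmin_r|].
  eapply Rle_trans; [apply Rmin_l | apply HB; lia].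
Qed.

Lemma qpoch_factor_lower_bound x q : 0 < q < 1 -> (forall j, x * q ^ j <> 1) ->
  exists dl, 0 < dl /\ forall j, dl <= Cmod (1 - RtoC x * RtoC (q ^ j))%C.
Proof.
  intros Hq Hne.
  assert (E : forall j, Cmod (1 - RtoC x * RtoC (q ^ j))%C = Rabs (1 - x * q ^ j)).
  { intros j. rewrite <- Cmod_R. f_equal.
    unfold Cminus, Cplus, Copp, Cmult, RtoC; simpl; f_equal; ring. }
  destruct (exists_pow_le q (/ (2 * (Rabs x + 1))) Hq) as [J HJ].
  { apply Rinv_0_lt_compat. pose proof (Rabs_pos x). lra. }
  destruct (exists_pos_lower_bound (fun j => Rabs (1 - x * q ^ j)) J) as [d [Hd Hd']].
  { intros j _. apply Rabs_pos_lt. specialize (Hne j). lra. }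
  exists (Rmin d (1 / 2)). split; [apply Rmin_pos; lra|]. intros j. rewrite E.
  destruct (Nat.lt_ge_cases j J) as [Hj|Hj]; [eapply Rle_trans; [apply Rmin_l | apply Hd'; auto]|].
  eapply Rle_trans; [apply Rmin_r|].
  assert (Hqj : q ^ j <= / (2 * (Rabs x + 1))).
  { eapply Rle_trans; [|exact HJ]. replace j with (J + (j - J))%nat by lia.
    rewrite pow_add. pose proof (pow_le_1 q (j - J) ltac:(lra)). pose proof (pow_le q J ltac:(lra)).
    nra. }
  assert (Rabs x * q ^ j <= 1 / 2).
  { pose proof (Rabs_pos x). pose proof (pow_le q j ltac:(lra)).
    apply Rle_trans with (Rabs x * / (2 * (Rabs x + 1))); [apply Rmult_le_compat_l; lra|].
    apply Rmult_le_reg_r with (2 * (Rabs x + 1)); [lra|].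
    rewrite Rmult_assoc, Rinv_l by lra. lra. }
  pose proof (Rabs_triang_inv 1 (x * q ^ j)) as Htri.
  rewrite Rabs_R1, Rabs_mult, (Rabs_pos_eq (q ^ j)) in Htri by (apply pow_le; lra). lra.
Qed.

Lemma compactC_bounded K : compactC K -> exists R, 0 < R /\ forall z, K z -> Cmod z <= R.
Proof.
  intros HK.
  destruct (HK nat (fun m z => Cmod z < INR m)) as [l Hl].
  - intros m x Hx. exists (mkposreal ((INR m - Cmod x) / 2) ltac:(lra)).
    intros y [H1 H2]. change C in x, y.
    change (Rabs (fst y + - fst x) < (INR m - Cmod x) / 2) in H1.
    change (Rabs (snd y + - snd x) < (INR m - Cmod x) / 2) in H2.
    pose proof (Cmod_triangle x (y - x)%C) as Htri. replace (x + (y - x))%C with y in Htri by ring.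
    pose proof (Cmod_2Rmax (y - x)%C).
    assert (Rmax (Rabs (fst (y - x)%C)) (Rabs (snd (y - x)%C)) < (INR m - Cmod x) / 2)
      by (apply Rmax_lub_lt; simpl; auto).
    assert (sqrt 2 < 2) by (rewrite <- (sqrt_square 2) at 2 by lra; apply sqrt_lt_1; lra).
    pose proof (Rmax_l (Rabs (fst (y - x)%C)) (Rabs (snd (y - x)%C))).
    pose proof (Rabs_pos (fst (y - x)%C)). nra.
  - intros z _. destruct (archimed (Cmod z)) as [H1 _].
    exists (Z.to_nat (up (Cmod z))). rewrite INR_IZR_INZ, Z2Nat.id; [exact H1|].
    apply le_IZR. pose proof (Cmod_ge_0 z). simpl. lra.
  - destruct (exists_upper_bound INR (S (fold_right max O l))) as [B [HB HBl]].
    exists (B + 1). split; [lra|]. intros z Hz.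
    destruct (Hl z Hz) as [i [Hi Hiz]].
    assert (Hil : (i <= fold_right max O l)%nat).
    { clear -Hi. induction l as [|j l IH]; [destruct Hi|].
      destruct Hi as [->|Hi]; simpl; [lia | specialize (IH Hi); lia]. }
    specialize (HBl i ltac:(lia)). lra.
Qed.

Lemma cvg_unif_disc_phi_shifted q Q m (a c : nat -> R) (b d : nat -> C) R :
  0 < q < 1 -> (forall j, Q * q ^ j <> 1) ->
  (forall j, (j < m)%nat -> 0 < a j /\ 0 < c j) -> 0 < R ->
  cvg_unif_on (fun z => Cmod z <= R)
    (fun n z => phi (qpow q (RtoC (- INR n)) :: map (shifted_param q a b n) (seq 0 m))
                    (RtoC Q :: map (shifted_param q c d n) (seq 0 m)) q (RtoC (q ^ n) * z)%C)
    (fun z => phi nil (RtoC Q :: nil) q z).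
Proof.
  intros Hq HQne Hac HR.
  destruct (qpoch_factor_lower_bound Q q Hq HQne) as [dl [Hdl Hdlj]].
  destruct (exists_upper_bound (fun j => exp (ln q * fst (b j))) m) as [B [HB HBj]].
  destruct (eventually_forall_lt (fun j n => Cmod (shifted_param q c d n j) <= 1 / 2) m)
    as [N0 HN0].
  { intros j Hj. destruct (Ccvg_shifted_param q c d j Hq (proj2 (Hac j Hj)) (1 / 2) ltac:(lra))
      as [N HN]. exists N. intros n Hn. specialize (HN n Hn).
    replace (shifted_param q c d n j - 0)%C with (shifted_param q c d n j) in HN by ring. lra. }
  set (G := (1 + B) ^ m / (dl * (1 / 2) ^ m * (1 - q))).
  assert (HG : 0 < G).
  { apply Rdiv_lt_0_compat; [apply pow_lt; lra|].
    repeat apply Rmult_lt_0_compat; try apply pow_lt; lra. }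
  apply (cvg_unif_on_Cseries _ _ _ (fun k => q ^ binom2 k * (R * G) ^ k) N0).
  - intros k eps He.
    assert (HQk : qpoch (RtoC Q) q k <> RtoC 0).
    { apply Cmod_gt_0. eapply Rlt_le_trans; [apply (pow_lt dl k Hdl)|].
      apply Cmod_qpoch_ge; [lra | exact Hdlj]. }
    destruct (cvg_unif_on_Cpow_mult _ _ k R ltac:(lra)
      (Ccvg_shifted_coef q Q a b c d m k Hq Hac HQk) eps He) as [N HN].
    exists N. intros n Hn z Hz. rewrite phi_term_shifted, phi_term_phi01 by lra. apply HN; auto.
  - intros n z k Hn Hz. rewrite phi_term_shifted by lra.
    rewrite Rpow_mult_distr, Rmult_comm, Rmult_assoc, (Rmult_comm (G ^ k)).
    apply Cmod_Cpow_mult_le; [exact Hz|].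
    apply Cmod_shifted_coef_le; [exact Hq | exact Hdl | exact HB | exact Hdlj | |].
    + intros j Hj. eapply Rle_trans; [apply Cmod_shifted_param_le | apply HBj, Hj].
      * exact Hq.
      * apply Hac, Hj.
    + intros j Hj. apply HN0; assumption.
  - intros z k Hz. rewrite phi_term_phi01.
    rewrite Rpow_mult_distr, Rmult_comm, Rmult_assoc, (Rmult_comm (G ^ k)).
    apply Cmod_Cpow_mult_le; [exact Hz | apply Cmod_phi01_coef_le; auto].
  - apply ex_series_qbinom2; [exact Hq | apply Rmult_lt_0_compat; lra].
Qed.

Theorem proposition5 (q : R) (s : nat) (alpha : R)
  (a c : nat -> R) (b d : nat -> C) :
  0 < q < 1 ->
  (1 <= s)%nat ->
  (forall m : nat, alpha <> - INR m) ->
  (forall j : nat, (j < s - 1)%nat ->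
     0 < a j /\ 0 < c j /\
     (forall (n : nat) (m : nat), (1 <= n)%nat ->
        a j * INR n + fst (b j) <> - INR m /\
        c j * INR n + fst (d j) <> - INR m)) ->
  cvg_unif_compact
    (fun (n : nat) (z : C) =>
       phi (qpow q (RtoC (- INR n))
              :: map (fun j => qpow q (Cplus (RtoC (a j * INR n)) (b j))) (seq 0 (s - 1)))
           (qpow q (RtoC alpha)
              :: map (fun j => qpow q (Cplus (RtoC (c j * INR n)) (d j))) (seq 0 (s - 1)))
           q (Cmult (RtoC (q ^ n)) z))
    (fun z : C => phi nil (qpow q (RtoC alpha) :: nil) q z)
  /\
  (forall z : C, z <> RtoC 0 ->
     phi nil (qpow q (RtoC alpha) :: nil) q z =
     Cmult (cpow (Cdiv (Copp z) (Cmult (RtoC ((q - 1) ^ 2)) (qpow q (RtoC alpha))))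
                 (RtoC ((1 - alpha) / 2)))
       (Cmult (qGamma q (RtoC alpha))
          (J2 (RtoC (alpha - 1))
              (Cmult (RtoC 2) (csqrt (Cdiv (Copp z) (qpow q (RtoC alpha))))) q))).
Proof.
  intros Hq _ Hal Hac.
  split; [|intros z Hz; apply phi01_closed_form; assumption].
  intros K HK eps He.
  destruct (compactC_bounded K HK) as [R [HR HKR]].
  rewrite qpow_RtoC.
  (* The conditions on [b j] and [d j] only keep the denominators of every term nonzero;
     the limit only involves large [n], where [|q^(c_j n + d_j)| <= 1/2] anyway. *)
  destruct (cvg_unif_disc_phi_shifted q (exp (ln q * alpha)) (s - 1) a c b d R Hq
    (fun j => exp_ln_mul_pow_neq_1 q alpha j Hq Hal)
    (fun j Hj => conj (proj1 (Hac j Hj)) (proj1 (proj2 (Hac j Hj)))) HR eps He) as [N HN].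
  exists N. intros n Hn z Hz. apply HN; auto.
Qed.
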